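(* Run the search algorithm described in the context (EMOA* ) on a directed graph $G=(V,E,\vec c)$ with non-negative edge cost vectors, start $v_o$, destination $v_d$, and a consistent heuristic $\vec h$. When the algorithm terminates, the returned set $\alpha(v_d)$ is a maximal set of cost-unique Pareto-optimal paths from $v_o$ to $v_d$: each label in $\alpha(v_d)$ represents (via parent pointers) a path from $v_o$ to $v_d$ whose cost vector is not dominated by the cost vector of any path from $v_o$ to $v_d$, distinct labels in $\alpha(v_d)$ have distinct cost vectors, and for every Pareto-optimal path from $v_o$ to $v_d$ there is a label in $\alpha(v_d)$ with the same cost vector.
   Context: The cost of a path $(v_1,\dots,v_\ell)$ is $\sum_{k=1}^{\ell-1}\vec c(v_k,v_{k+1})$. A path from $v_o$ to $v_d$ is Pareto-optimal if its cost vector is not dominated by the cost vector of any other path from $v_o$ to $v_d$. Graph $G=(V,E,\vec c)$ is directed, with $\vec c(e)\in(\mathbb{R}^+)^M$ for every edge. A heuristic $\vec h:V\to(\mathbb{R}^+)^M$ is consistent if $\vec h(v)\le\vec h(u)+\vec c(u,v)$ componentwise for every edge $(u,v)$, and $\vec h(v_d)=\vec 0$. A label is a pair $l=(v(l),\vec g(l))$ with $v(l)\in V$, $\vec g(l)\in(\mathbb{R}^+)^M$, together with a parent pointer; $\vec f(l)=\vec g(l)+\vec h(v(l))$. For $a,b$ vectors, $a\le b$ means componentwise $\le$; $a$ dominates $b$ iff $a\le b$ and $a\ne b$. OPEN is a priority queue of labels ordered by lexicographic order of $\vec f$. Each vertex $v$ has a frontier set $\alpha(v)$ of labels at $v$.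 Algorithm: initialize OPEN $=\{(v_o,\vec 0)\}$ (no parent), $\alpha(v)=\emptyset$ for all $v$. While OPEN is nonempty: extract from OPEN a label $l$ with lexicographically minimal $\vec f(l)$. If FrontierCheck($l$) (there is $l'\in\alpha(v(l))$ with $\vec g(l')\le\vec g(l)$) or SolutionCheck($l$) (there is $l^*\in\alpha(v_d)$ with $\vec g(l^* )\le\vec f(l)$) holds, discard $l$ and continue. Otherwise UpdateFrontier($l$): remove from $\alpha(v(l))$ all labels whose $\vec g$ is dominated by $\vec g(l)$, then add $l$ to $\alpha(v(l))$. If $v(l)=v_d$, continue. Otherwise expand $l$: for each edge $(v(l),v')\in E$, form $l'=(v',\vec g(l)+\vec c(v(l),v'))$ with parent $l$; if FrontierCheck($l'$) or SolutionCheck($l'$) holds discard $l'$, else insert $l'$ into OPEN. On termination return $\alpha(v_d)$. *)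

From HB Require Import structures.
From mathcomp Require Import all_boot all_order all_algebra.
Set Implicit Arguments. Unset Strict Implicit. Unset Printing Implicit Defensive.
Import Order.TTheory GRing.Theory Num.Theory.
Local Open Scope ring_scope.

(* A label: vertex, cost-so-far vector g, and an optional parent pointer. *)
Inductive label (V G : Type) : Type :=
  Label : V -> G -> option (label V G) -> label V G.

Definition lv {V G} (l : label V G) : V := let: Label v _ _ := l in v.
Definition lg {V G} (l : label V G) : G := let: Label _ g _ := l in g.
Definition lpar {V G} (l : label V G) : option (label V G) :=
  let: Label _ _ p := l in p.

Fixpoint path_of {V G} (l : label V G) : seq V :=
  match l with
  | Label v _ None => [:: v]
  | Label v _ (Some p) => rcons (path_of p) v
  end.

Definition vle {R : numDomainType} {M : nat} (a b : 'rV[R]_M) : bool :=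
  [forall i, a ord0 i <= b ord0 i].
Definition dom {R : numDomainType} {M : nat} (a b : 'rV[R]_M) : bool :=
  vle a b && (a != b).
Definition lexle {R : numDomainType} {M : nat} (a b : 'rV[R]_M) : Prop :=
  a = b \/ exists i : 'I_M,
    (forall j : 'I_M, (j < i)%N -> a ord0 j = b ord0 j) /\ a ord0 i < b ord0 i.

(* list membership without decidable equality *)
Fixpoint inl {T : Type} (x : T) (s : seq T) : Prop :=
  match s with [::] => False | y :: s' => y = x \/ inl x s' end.

Record state (V G : Type) := State {
  open : seq (label V G);
  alpha : V -> seq (label V G) }.

Section EMOA.
Variables (R : numDomainType) (M : nat) (V : finType) (E : rel V)
  (c : V -> V -> 'rV[R]_M) (h : V -> 'rV[R]_M) (vo vd : V).

Notation lab := (label V 'rV[R]_M).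

Fixpoint pcost (x : V) (p : seq V) : 'rV[R]_M :=
  match p with [::] => 0 | y :: p' => c x y + pcost y p' end.

Definition cost (s : seq V) : 'rV[R]_M :=
  match s with [::] => 0 | x :: p => pcost x p end.

Definition is_path_od (s : seq V) : Prop :=
  match s with
  | [::] => False
  | x :: p => x = vo /\ last x p = vd /\ path E x p
  end.

Definition pareto_optimal (s : seq V) : Prop :=
  is_path_od s /\ forall s', is_path_od s' -> ~~ dom (cost s') (cost s).

Definition fval (l : lab) : 'rV[R]_M := lg l + h (lv l).

Definition frontier_check (A : V -> seq lab) (l : lab) : bool :=
  has (fun l' => vle (lg l') (lg l)) (A (lv l)).
Definition solution_check (A : V -> seq lab) (l : lab) : bool :=
  has (fun ls => vle (lg ls) (fval l)) (A vd).
Definition pruned A l := frontier_check A l || solution_check A l.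

Definition update_frontier (A : V -> seq lab) (l : lab) : V -> seq lab :=
  fun u => if u == lv l then l :: filter (fun l' => ~~ dom (lg l) (lg l')) (A u)
           else A u.

Definition children (A : V -> seq lab) (l : lab) : seq lab :=
  filter (fun l' => ~~ pruned A l')
    [seq Label v' (lg l + c (lv l) v') (Some l) | v' <- enum V & E (lv l) v'].

Definition init_state : state V 'rV[R]_M :=
  State [:: Label vo 0 None] (fun _ => [::]).

(* One iteration of the main loop (extraction of a lexicographically
   f-minimal label; ties are resolved nondeterministically). *)
Definition step (st st' : state V 'rV[R]_M) : Prop :=
  exists o1 l o2,
    open st = o1 ++ l :: o2 /\
    (forall l', inl l' (open st) -> lexle (fval l) (fval l')) /\
    (if pruned (alpha st) l then st' = State (o1 ++ o2) (alpha st)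
     else let A' := update_frontier (alpha st) l in
          if lv l == vd then st' = State (o1 ++ o2) A'
          else st' = State (o1 ++ o2 ++ children A' l) A').

Inductive run : state V 'rV[R]_M -> Prop :=
  | run_init : run init_state
  | run_step st st' : run st -> step st st' -> run st'.

End EMOA.

From HB Require Import structures.
From Stdlib Require Import Setoid.
From mathcomp Require Import all_boot all_order all_algebra.
Import Order.TTheory GRing.Theory Num.Theory.
Local Open Scope ring_scope.
Set Implicit Arguments. Unset Strict Implicit. Unset Printing Implicit Defensive.

(* Correctness rests on two invariants of every run.
   First, every frontier alpha(v) is an antichain for the componentwise order
   on g: a label enters alpha(v) only if no label there is <= it, and it
   evicts the labels it dominates.
   Second, fix a path p from vo to vd. Say a prefix q of p is covered when a
   label at last q with g <= cost q lies in OPEN or in alpha(last q). Then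
   always either alpha(vd) holds a label with g <= cost p, or the empty prefix
   is covered and every covered prefix of p in a frontier has its one-edge
   extension covered too. Expanding a label pushes the coverage one edge
   further; pruning by FrontierCheck hands it to the frontier label, and
   pruning by SolutionCheck yields the label in alpha(vd), since consistency
   of h gives f <= cost p along p. Once OPEN is empty, coverage runs along
   all of p, so alpha(vd) contains a label with g <= cost p for every path p
   from vo to vd; together with the antichain property this gives the three
   claims. *)

Section ListMembership.
Variable T : Type.

Lemma inl_cat (x : T) s1 s2 : inl x (s1 ++ s2) <-> inl x s1 \/ inl x s2.
Proof. by elim: s1 => [|y s IH] /=; [tauto|]; rewrite IH; tauto. Qed.

Lemma inl_filter (f : pred T) x s : inl x (filter f s) <-> inl x s /\ f x.
Proof.
elim: s => [|y s IH] /=; first tauto.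
case Hy: (f y) => /=; rewrite ?IH; split.
- by case=> [<-|]; tauto.
- by case=> [[Hyx|H1] H2]; [left|]; tauto.
- by tauto.
- by case=> [[Hyx|H1] H2]; [subst y; rewrite H2 in Hy | tauto].
Qed.

Lemma inl_map U (f : T -> U) y s :
  inl y (map f s) <-> exists x, inl x s /\ f x = y.
Proof.
elim: s => [|z s IH] /=; first by split => // [[x []]].
rewrite IH; split.
- by case=> [<-|[x [H1 H2]]]; [exists z | exists x]; auto.
- by case=> x [[<-|H] H2]; [left | right; exists x].
Qed.

Lemma has_inl (p : pred T) s : has p s <-> exists x, inl x s /\ p x.
Proof.
elim: s => [|y s IH] /=; first by split => // [[x []]].
split.
- by case/orP => [Hy|/IH [x [H1 H2]]]; [exists y | exists x]; auto.
- case=> x [[<-|H] H2]; first by rewrite H2.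
  by apply/orP; right; apply/IH; exists x.
Qed.

Lemma all_inl (p : pred T) s : (forall x, inl x s -> p x) -> all p s.
Proof. by elim: s => [|y s IH] //= H; rewrite H; auto. Qed.

Lemma pairwise_inl (r : rel T) s a b : pairwise r s -> inl a s -> inl b s ->
  a = b \/ r a b \/ r b a.
Proof.
elim: s => [|y s IH] //; rewrite pairwise_cons => /andP [Hall Hp] /=.
have Hy x : inl x s -> r y x.
  by elim: s Hall {IH Hp} => [|z s IH'] //= /andP [H1 H2] [<-|]; auto.
by case=> [<-|Ha] [<-|Hb]; auto.
Qed.

End ListMembership.

Lemma inl_mem (T : eqType) (x : T) s : inl x s <-> x \in s.
Proof.
elim: s => [|y s IH] //=; rewrite in_cons IH; split.
- by case=> [->|->]; rewrite ?eqxx ?orbT.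
- by case/orP => [/eqP ->|]; auto.
Qed.

Section ComponentwiseOrder.
Variables (R : numDomainType) (M : nat).
Implicit Types a b d : 'rV[R]_M.

Lemma vle_refl a : vle a a.
Proof. by apply/forallP. Qed.

Lemma vle_trans a b d : vle a b -> vle b d -> vle a d.
Proof.
by move=> /forallP H1 /forallP H2; apply/forallP => i; apply: le_trans (H1 i) (H2 i).
Qed.

Lemma vle_anti a b : vle a b -> vle b a -> a = b.
Proof.
move=> /forallP H1 /forallP H2; apply/matrixP => i j; rewrite (ord1 i).
by apply/eqP; rewrite eq_le H1 H2.
Qed.

Lemma vleD a b a' b' : vle a b -> vle a' b' -> vle (a + a') (b + b').
Proof.
by move=> /forallP H1 /forallP H2; apply/forallP => i; rewrite !mxE; apply: lerD.
Qed.

Lemma vle_ndom_eq a b : vle a b -> ~~ dom a b -> a = b.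
Proof. by rewrite /dom => -> /=; rewrite negbK => /eqP. Qed.

Lemma dom_vle a b : dom a b -> vle a b.
Proof. by case/andP. Qed.

Definition incomparable a b := ~~ vle a b && ~~ vle b a.

Lemma antichain_uniq s : pairwise incomparable s -> uniq s.
Proof.
elim: s => [|a s IH] //; rewrite pairwise_cons => /andP [Hall Hp] /=.
rewrite IH // andbT; apply/negP => Ha.
by move/allP: Hall => /(_ a Ha); rewrite /incomparable vle_refl.
Qed.

End ComponentwiseOrder.

Arguments incomparable {R M}.

Section EMOACorrectness.
Variables (R : numDomainType) (M : nat) (V : finType) (E : rel V)
  (c : V -> V -> 'rV[R]_M) (h : V -> 'rV[R]_M) (vo vd : V).
Hypothesis c_nonneg : forall u v, E u v -> forall i, 0 <= c u v ord0 i.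
Hypothesis h_consistent : forall u v, E u v -> vle (h u) (h v + c u v).
Hypothesis h_dest : h vd = 0.
Notation lab := (label V 'rV[R]_M).
Notation st := (state V 'rV[R]_M).
Implicit Types (A : V -> seq lab) (l w : lab) (O : seq lab).

Lemma pcost_rcons x p y : pcost c x (rcons p y) = pcost c x p + c (last x p) y.
Proof. by elim: p x => [|z p IH] x /=; rewrite ?addr0 ?add0r // IH addrA. Qed.

Lemma pcost_cat x p1 p2 :
  pcost c x (p1 ++ p2) = pcost c x p1 + pcost c (last x p1) p2.
Proof. by elim: p1 x => [|z p IH] x /=; rewrite ?add0r // IH addrA. Qed.

Lemma pcost_ge0 x p : path E x p -> vle 0 (pcost c x p).
Proof.
elim: p x => [|z p IH] x /=; first by rewrite vle_refl.
case/andP => Hxz Hp; rewrite -[0]addr0; apply: vleD; last exact: IH.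
by apply/forallP => i; rewrite mxE; apply: c_nonneg.
Qed.

Lemma h_le_pcost x p : path E x p -> vle (h x) (pcost c x p + h (last x p)).
Proof.
elim: p x => [|z p IH] x /=; first by rewrite add0r vle_refl.
case/andP => Hxz Hp; apply: vle_trans (h_consistent Hxz) _.
by rewrite -addrA addrC; apply: vleD; [apply: IH | apply: vle_refl].
Qed.

(** * Labels represent paths from [vo] of cost [g] *)

Definition valid_label l : Prop :=
  if path_of l is x :: p then
    [/\ x = vo, last x p = lv l, path E x p & pcost c x p = lg l]
  else False.

Definition child l y : lab := Label y (lg l + c (lv l) y) (Some l).

Lemma valid_child l y : valid_label l -> E (lv l) y -> valid_label (child l y).
Proof.
rewrite /valid_label /=; case: (path_of l) => [|x p] //= [-> Hl Hp Hc] Hy.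
by rewrite last_rcons rcons_path pcost_rcons Hp Hl Hy Hc.
Qed.

Lemma inl_childrenP A l l' : inl l' (children E c h vd A l) ->
  exists y, [/\ E (lv l) y, l' = child l y & ~~ pruned h vd A l'].
Proof.
rewrite /children inl_filter inl_map => -[[y [Hy <-]] Hpr]; exists y.
by move: Hy; rewrite inl_mem mem_filter => /andP [].
Qed.

Lemma inl_children A l y : E (lv l) y -> ~~ pruned h vd A (child l y) ->
  inl (child l y) (children E c h vd A l).
Proof.
move=> Hy Hpr; rewrite /children inl_filter inl_map; split=> //.
by exists y; rewrite inl_mem mem_filter Hy mem_enum.
Qed.

Lemma inl_update_frontier A l u w : inl w (update_frontier A l u) ->
  (w = l /\ u = lv l) \/ inl w (A u).
Proof.
rewrite /update_frontier; case: eqP => [->|_] /=; last by right.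
by case=> [<-|]; [left | rewrite inl_filter => -[]; right].
Qed.

Lemma update_frontier_new A l : inl l (update_frontier A l (lv l)).
Proof. by rewrite /update_frontier eqxx; left. Qed.

Lemma update_frontier_below A l u w : inl w (A u) ->
  exists w', inl w' (update_frontier A l u) /\ vle (lg w') (lg w).
Proof.
rewrite /update_frontier; case: eqP => [->|_] Hw; last by exists w; rewrite vle_refl.
case Hd: (dom (lg l) (lg w)); first by exists l; split; [left | apply: dom_vle].
by exists w; rewrite vle_refl; split=> //; right; rewrite inl_filter Hd.
Qed.

Lemma update_frontier_antichain A l : ~~ frontier_check A l ->
  (forall u, pairwise incomparable [seq lg w | w <- A u]) ->
  forall u, pairwise incomparable [seq lg w | w <- update_frontier A l u].
Proof.
move=> Hf Hac u; rewrite /update_frontier; case: eqP => [Hu|_] //=.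
rewrite pairwise_map pairwise_filter -?pairwise_map // andbT all_map.
apply: all_inl => x; rewrite inl_filter => -[Hx Hd] /=.
have Hxl : ~~ vle (lg x) (lg l).
  apply/negP => Hv; move/negP: Hf; apply; apply/has_inl.
  by exists x; rewrite -Hu.
rewrite /incomparable Hxl andbT; apply/negP => Hv.
by move/negP: Hxl; rewrite (vle_ndom_eq Hv Hd) vle_refl.
Qed.

Definition labels_valid (s : st) : Prop :=
  (forall l, inl l (open s) -> valid_label l) /\
  (forall v l, inl l (alpha s v) -> valid_label l /\ lv l = v).

Lemma step_labels_valid s s' :
  labels_valid s -> step E c h vd s s' -> labels_valid s'.
Proof.
move=> [Ho Ha] [o1 [l [o2 [Hop [_ Hst]]]]].
have Hl : valid_label l by apply: Ho; rewrite Hop inl_cat; right; left.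
have Ho' l' : inl l' (o1 ++ o2) -> valid_label l'.
  by rewrite inl_cat => H; apply: Ho; rewrite Hop inl_cat /=; tauto.
have Ha' v l' : inl l' (update_frontier (alpha s) l v) -> valid_label l' /\ lv l' = v.
  by case/inl_update_frontier => [[-> ->]|]; [| apply: Ha].
move: Hst; case: ifP => _ /=; first by move=> ->; split.
case: ifP => _ ->; first by split.
split=> //= l'; rewrite catA inl_cat => -[/Ho' //|/inl_childrenP [y [Hy -> _]]].
exact: valid_child.
Qed.

Lemma step_antichain s s' :
  (forall u, pairwise incomparable [seq lg w | w <- alpha s u]) ->
  step E c h vd s s' ->
  forall u, pairwise incomparable [seq lg w | w <- alpha s' u].
Proof.
move=> Hac [o1 [l [o2 [_ [_ Hst]]]]].
move: Hst; case: ifP => Hp /=; first by move=> ->.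
have Hf : ~~ frontier_check (alpha s) l by move: Hp; rewrite /pruned; case: frontier_check.
by case: ifP => _ ->; apply: update_frontier_antichain.
Qed.

(** * Coverage of a fixed path from [vo] to [vd] *)

Section Coverage.
Variable p : seq V.
Hypothesis p_path : path E vo p.
Hypothesis p_last : last vo p = vd.

Definition solution_covers A :=
  exists l, inl l (A vd) /\ vle (lg l) (pcost c vo p).
Definition frontier_covers A q :=
  exists l, inl l (A (last vo q)) /\ vle (lg l) (pcost c vo q).
Definition open_covers O q :=
  exists l, [/\ inl l O, lv l = last vo q & vle (lg l) (pcost c vo q)].

Definition coverage (s : st) :=
  (open_covers (open s) [::] \/ frontier_covers (alpha s) [::] \/
     solution_covers (alpha s)) /\
  forall q y r, p = q ++ y :: r -> frontier_covers (alpha s) q ->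
    [\/ frontier_covers (alpha s) (rcons q y), open_covers (open s) (rcons q y)
      | solution_covers (alpha s)].

Lemma pruned_covers A l q r : p = q ++ r ->
  lv l = last vo q -> vle (lg l) (pcost c vo q) ->
  pruned h vd A l -> frontier_covers A q \/ solution_covers A.
Proof.
move=> Hp Hv Hle /orP [/has_inl [w [Hw Hwl]]|/has_inl [w [Hw Hwl]]].
  by left; exists w; rewrite -Hv; split=> //; apply: vle_trans Hwl Hle.
right; exists w; split=> //; apply: vle_trans Hwl _.
move: p_path p_last; rewrite Hp cat_path last_cat => /andP [_ Hr] Hl.
rewrite pcost_cat /fval Hv; apply: vleD => //.
by have := h_le_pcost Hr; rewrite Hl h_dest addr0.
Qed.

Lemma solution_covers_prefix A q r : p = q ++ r -> last vo q = vd ->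
  frontier_covers A q -> solution_covers A.
Proof.
move=> Hp Hq [w [Hw Hle]]; exists w; rewrite -Hq; split=> //.
apply: vle_trans Hle _; rewrite Hp pcost_cat -[X in vle X _]addr0.
apply: vleD; first exact: vle_refl.
by apply: pcost_ge0; move: p_path; rewrite Hp cat_path => /andP [].
Qed.

Lemma open_covers_extract o1 l o2 q : open_covers (o1 ++ l :: o2) q ->
  open_covers (o1 ++ o2) q \/ (lv l = last vo q /\ vle (lg l) (pcost c vo q)).
Proof.
move=> [w [Hw Hv Hle]]; rewrite !inl_cat /= in Hw.
case: Hw => [H|[->|H]]; [left | by right | left];
  by exists w; split=> //; apply/inl_cat; auto.
Qed.

Lemma frontier_covers_update A l q :
  frontier_covers A q -> frontier_covers (update_frontier A l) q.
Proof.
move=> [w [Hw Hle]]; have [w' [Hw' Hle']] := update_frontier_below l Hw.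
by exists w'; split=> //; apply: vle_trans Hle' Hle.
Qed.

Lemma solution_covers_update A l :
  solution_covers A -> solution_covers (update_frontier A l).
Proof.
move=> [w [Hw Hle]]; have [w' [Hw' Hle']] := update_frontier_below l Hw.
by exists w'; split=> //; apply: vle_trans Hle' Hle.
Qed.

Lemma frontier_covers_new A l q : lv l = last vo q ->
  vle (lg l) (pcost c vo q) -> frontier_covers (update_frontier A l) q.
Proof. by move=> Hv Hle; exists l; rewrite -Hv; split=> //; apply: update_frontier_new. Qed.

Lemma coverage_discard s o1 l o2 : open s = o1 ++ l :: o2 -> coverage s ->
  pruned h vd (alpha s) l -> coverage (State (o1 ++ o2) (alpha s)).
Proof.
move=> Hop [H1 H2] Hpr; rewrite Hop in H1 H2; split=> /=.
  case: H1 => [|H]; last by auto.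
  case/open_covers_extract => [|[Hv Hle]]; first by auto.
  by case: (pruned_covers (erefl : p = [::] ++ p) Hv Hle Hpr); auto.
move=> q y r Hp Hs; case: (H2 q y r Hp Hs) => [||]; try by constructor.
case/open_covers_extract => [|[Hv Hle]]; first by constructor 2.
have Hsplit : p = rcons q y ++ r by rewrite cat_rcons.
by case: (pruned_covers Hsplit Hv Hle Hpr); [constructor 1 | constructor 3].
Qed.

Lemma coverage_insert s o1 l o2 O' : open s = o1 ++ l :: o2 -> coverage s ->
  (forall q, open_covers (o1 ++ o2) q -> open_covers O' q) ->
  (forall q y r, p = q ++ y :: r ->
     lv l = last vo q -> vle (lg l) (pcost c vo q) ->
     [\/ frontier_covers (update_frontier (alpha s) l) (rcons q y),
          open_covers O' (rcons q y)
        | solution_covers (update_frontier (alpha s) l)]) ->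
  coverage (State O' (update_frontier (alpha s) l)).
Proof.
move=> Hop [H1 H2] HO Hnew; rewrite Hop in H1 H2; split=> /=.
  case: H1 => [|[Hs|Hs]].
  - case/open_covers_extract => [Ho|[Hv Hle]]; first by left; apply: HO.
    by right; left; apply: frontier_covers_new.
  - by right; left; apply: frontier_covers_update.
  - by right; right; apply: solution_covers_update.
move=> q y r Hp [w [Hw Hle]].
case/inl_update_frontier: Hw => [[Hwl Hq]|Hw].
  by subst w; apply: Hnew Hp (esym Hq) Hle.
have Hs : frontier_covers (alpha s) q by exists w.
case: (H2 q y r Hp Hs) => [Hs'|Ho|Hs'].
- by constructor 1; apply: frontier_covers_update.
- case/open_covers_extract: Ho => [Ho|[Hv Hle']]; first by constructor 2; apply: HO.
  by constructor 1; apply: frontier_covers_new.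
- by constructor 3; apply: solution_covers_update.
Qed.

Lemma step_coverage s s' : coverage s -> step E c h vd s s' -> coverage s'.
Proof.
move=> Hcov [o1 [l [o2 [Hop [_ Hst]]]]].
move: Hst; case: ifP => Hpr /=; first by move=> ->; apply: coverage_discard Hop Hcov Hpr.
set A' := update_frontier (alpha s) l.
case: eqP => [Hvd|_] ->.
  apply: coverage_insert Hop Hcov _ _ => // q y r Hp Hq Hle; constructor 3.
  by apply: (@solution_covers_prefix A' q (y :: r) Hp); [rewrite -Hq | apply: frontier_covers_new].
apply: coverage_insert Hop Hcov _ _ => [q [w [Hw Hv Hle]]|q y r Hp Hq Hle].
  by exists w; split=> //; rewrite catA inl_cat; left.
have Hy : E (lv l) y.
  by move: p_path; rewrite Hp cat_path Hq /= => /andP [_ /andP []].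
have Hcl : lv (child l y) = last vo (rcons q y) by rewrite last_rcons.
have Hcle : vle (lg (child l y)) (pcost c vo (rcons q y)).
  by rewrite pcost_rcons /= -Hq; apply: vleD => //; apply: vle_refl.
case Hpc: (pruned h vd A' (child l y)).
  have Hsplit : p = rcons q y ++ r by rewrite cat_rcons.
  by case: (pruned_covers Hsplit Hcl Hcle Hpc); [constructor 1 | constructor 3].
constructor 2; exists (child l y); split=> //.
by rewrite !inl_cat; right; right; apply: inl_children; rewrite ?Hpc.
Qed.

Lemma run_coverage s : run E c h vo vd s -> coverage s.
Proof.
elim=> [|s0 s1 _ IH Hs]; last exact: step_coverage Hs.
split; first by left; exists (Label vo 0 None); rewrite vle_refl; split=> //; left.
by move=> q y r _ [w []].
Qed.

Lemma terminated_solution_covers s : run E c h vo vd s -> open s = [::] ->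
  solution_covers (alpha s).
Proof.
move=> Hr Ho; have [H1 H2] := run_coverage Hr; rewrite Ho in H1 H2.
have Hnone q : ~ open_covers [::] q by case=> w [].
suff /(_ p [::]) : forall q r, p = q ++ r ->
    frontier_covers (alpha s) q \/ solution_covers (alpha s).
  by rewrite cats0 => /(_ erefl) [[w [Hw Hle]]|//]; exists w; rewrite -p_last.
elim/last_ind => [|q y IH] r Hpqr; first by case: H1 => [/Hnone|].
rewrite cat_rcons in Hpqr; case: (IH _ Hpqr) => [Hs|]; last by right.
by case: (H2 q y r Hpqr Hs) => [||] => [|/Hnone|]; auto.
Qed.

End Coverage.

Lemma run_labels_valid s : run E c h vo vd s -> labels_valid s.
Proof.
elim=> [|s0 s1 _ IH Hs]; last exact: step_labels_valid IH Hs.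
by split=> //= l [<-|//].
Qed.

Lemma run_antichain s : run E c h vo vd s ->
  forall u, pairwise incomparable [seq lg w | w <- alpha s u].
Proof. by elim=> [//|s0 s1 _ IH Hs]; apply: step_antichain IH Hs. Qed.

Lemma frontier_label_path s l : run E c h vo vd s -> inl l (alpha s vd) ->
  is_path_od E vo vd (path_of l) /\ cost c (path_of l) = lg l.
Proof.
move=> /run_labels_valid [_ Ha] /Ha [Hv <-]; move: Hv.
by rewrite /valid_label /is_path_od /cost; case: (path_of l) => [|x q] // [-> ->].
Qed.

End EMOACorrectness.

Lemma antichain_vle_eq (R : numDomainType) (M : nat) (V : finType)
    (s : seq (label V 'rV[R]_M)) a b :
  pairwise incomparable [seq lg w | w <- s] -> inl a s -> inl b s ->
  vle (lg a) (lg b) -> a = b.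
Proof.
rewrite pairwise_map => Hp Ha Hb Hv.
by case: (pairwise_inl Hp Ha Hb) => [//|[/andP [H _]|/andP [_ H]]]; rewrite Hv in H.
Qed.

Theorem theorem2 (R : realFieldType) (M : nat) (V : finType) (E : rel V)
  (c : V -> V -> 'rV[R]_M) (h : V -> 'rV[R]_M) (vo vd : V)
  (c_nonneg : forall u v, E u v -> forall i, 0 <= c u v ord0 i)
  (h_nonneg : forall v i, 0 <= h v ord0 i)
  (h_consistent : forall u v, E u v -> vle (h u) (h v + c u v))
  (h_dest : h vd = 0)
  (st : state V 'rV[R]_M)
  (Hrun : run E c h vo vd st) (Hterm : open st = [::]) :
  (forall l, inl l (alpha st vd) ->
      pareto_optimal E c vo vd (path_of l) /\ cost c (path_of l) = lg l)
  /\ uniq [seq lg l | l <- alpha st vd]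
  /\ (forall s, pareto_optimal E c vo vd s ->
        exists l, inl l (alpha st vd) /\ lg l = cost c s).
Proof.
have Hac := run_antichain Hrun vd.
have Hpath l (Hl : inl l (alpha st vd)) := frontier_label_path Hrun Hl.
have Hcover p (Hp : path E vo p) (Hl : last vo p = vd) :=
  terminated_solution_covers c_nonneg h_consistent h_dest Hp Hl Hrun Hterm.
split; [|split; first exact: antichain_uniq].
  move=> l Hl; have [Hod Hc] := Hpath l Hl; do 2!split=> //.
  case=> [|x' p'] //= [-> [Hl' Hp']]; have [w [Hw Hle]] := Hcover _ Hp' Hl'.
  rewrite Hc; apply/negP => /andP [Hv Hne].
  have Hwl : w = l by apply: (antichain_vle_eq Hac Hw Hl); apply: vle_trans Hle Hv.
  by subst w; move/negP: Hne; apply; apply/eqP; apply: vle_anti Hv Hle.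
case=> [|x p] [Hod Hpo] //; case: Hod => Hx [Hl Hp]; subst x.
have [w [Hw Hle]] := Hcover _ Hp Hl.
have [Hodw Hcw] := Hpath w Hw.
have := Hpo _ Hodw; rewrite Hcw => Hndom.
by exists w; split=> //; apply: vle_ndom_eq Hle Hndom.
Qed.
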